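(* Let $G$ be a group endowed with an explicit solution to the conjugacy problem and with an algorithm which, for every $a\in G$, computes a finite generating set of the centralizer $C_G(a)$. Let $H<G$ be a subgroup satisfying Condition PC, witnessed by a triple $(K,K',\phi)$ where $\phi$ is computable, $K$ has a solution to the membership problem, and the finite subgroup $K'$ is given by the list of its elements. Then $H$ has an explicit solution to the conjugacy problem: there is an algorithm which, given $a,b\in H$, decides whether there exists $h'\in H$ with $b=(h')^{-1}ah'$ and, if so, outputs such an $h'$.
   Context: An explicit solution to the conjugacy problem in a group $G$ is an algorithm which, given $a,b\in G$, decides whether there is $c\in G$ with $a=c^{-1}bc$ and, if so, produces such a $c$. The centralizer $C_G(a)$ is the set of elements of $G$ commuting with $a$ (assumed finitely generated). A group $K$ has a solution to the membership problem if there is an algorithm which, given a finitely generated subgroup $L<K$ (by a finite generating set) and $g\in K$, decides whether $g\in L$. A subgroup $H<G$ satisfies Condition PC if there exist a group $K$, a subgroup $K'<K$ and a homomorphism $\phi:G\to K$ with $H=\phi^{-1}(K')$, such that $K$ has a solution to the membership problem and $K'$ is finite. *)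

(* Computability is modelled explicitly by general
   (mu-)recursive programs acting on natural-number codes, so that
   "there is an algorithm" cannot be trivialised by classical choice. *)
From Stdlib Require Import List Arith.
Import ListNotations.

Inductive prog : Type :=
| Zero : prog
| Succ : prog
| Proj : nat -> prog
| Comp : prog -> list prog -> prog
| Prec : prog -> prog -> prog
| Mu   : prog -> prog.

Inductive eval : prog -> list nat -> nat -> Prop :=
| eZero xs : eval Zero xs 0
| eSucc x xs : eval Succ (x :: xs) (S x)
| eProj i xs : eval (Proj i) xs (nth i xs 0)
| eComp f gs xs ys y : evals gs xs ys -> eval f ys y -> eval (Comp f gs) xs y
| ePrec0 g h xs y : eval g xs y -> eval (Prec g h) (0 :: xs) y
| ePrecS g h n xs r y :
    eval (Prec g h) (n :: xs) r -> eval h (n :: r :: xs) y ->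
    eval (Prec g h) (S n :: xs) y
| eMu f xs n :
    eval f (n :: xs) 0 ->
    (forall m, m < n -> exists k, eval f (m :: xs) (S k)) ->
    eval (Mu f) xs n
with evals : list prog -> list nat -> list nat -> Prop :=
| esNil xs : evals nil xs nil
| esCons g gs xs y ys : eval g xs y -> evals gs xs ys -> evals (g :: gs) xs (y :: ys).

Definition cpair (x y : nat) : nat := (x + y) * (x + y + 1) / 2 + y.
Fixpoint code_list (l : list nat) : nat :=
  match l with
  | nil => 0
  | x :: l' => S (cpair x (code_list l'))
  end.

Record group := Group {
  car :> Type;
  mul : car -> car -> car;
  inv : car -> car;
  one : car;
  mulA : forall x y z, mul x (mul y z) = mul (mul x y) z;
  mul1g : forall x, mul one x = x;
  mulVg : forall x, mul (inv x) x = one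
}.
Arguments mul {g}. Arguments inv {g}. Arguments one {g}.

Definition is_subgroup (G : group) (S : G -> Prop) : Prop :=
  S one /\ (forall x y, S x -> S y -> S (mul x y)) /\ (forall x, S x -> S (inv x)).

Definition is_hom (G K : group) (f : G -> K) : Prop :=
  forall x y, f (mul x y) = mul (f x) (f y).

Inductive generated (G : group) (l : list G) : G -> Prop :=
| gen_in x : In x l -> generated G l x
| gen_one : generated G l one
| gen_mul x y : generated G l x -> generated G l y -> generated G l (mul x y)
| gen_inv x : generated G l x -> generated G l (inv x).

Definition centralizer (G : group) (a : G) : G -> Prop :=
  fun g => mul g a = mul a g.

Definition explicit_group (G : group) (dec : nat -> G) : Prop :=
  (forall g : G, exists c, dec c = g) /\
  (exists p, forall x y, exists r, eval p [x; y] r /\ dec r = mul (dec x) (dec y)) /\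
  (exists p, forall x, exists r, eval p [x] r /\ dec r = inv (dec x)).

(** explicit solution to the conjugacy problem in G (convention of the
    context: find c with a = c^-1 b c); output 0 = "no", S c = "yes, c" *)
Definition conj_solution_G (G : group) (dec : nat -> G) : Prop :=
  exists p, forall x y, exists r, eval p [x; y] r /\
    ((r = 0 /\ ~ exists c : G, dec x = mul (inv c) (mul (dec y) c)) \/
     (exists c, r = S c /\ dec x = mul (inv (dec c)) (mul (dec y) (dec c)))).

(** explicit solution to the conjugacy problem in a subgroup H (convention
    of the theorem: given a, b in H find h' in H with b = h'^-1 a h') *)
Definition conj_solution_sub (G : group) (dec : nat -> G) (H : G -> Prop) : Prop :=
  exists p, forall x y, H (dec x) -> H (dec y) -> exists r, eval p [x; y] r /\
    ((r = 0 /\ ~ exists h : G, H h /\ dec y = mul (inv h) (mul (dec x) h)) \/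
     (exists c, r = S c /\ H (dec c) /\
        dec y = mul (inv (dec c)) (mul (dec x) (dec c)))).

Definition centralizer_algorithm (G : group) (dec : nat -> G) : Prop :=
  exists p, forall x, exists r, eval p [x] r /\
    exists l : list nat, r = code_list l /\
      (forall g, generated G (map dec l) g <-> centralizer G (dec x) g).

Definition membership_solution (K : group) (dec : nat -> K) : Prop :=
  exists p, forall (l : list nat) (g : nat),
    (generated K (map dec l) (dec g) -> eval p [code_list l; g] 1) /\
    (~ generated K (map dec l) (dec g) -> eval p [code_list l; g] 0).

Definition computable_map (G K : group) (decG : nat -> G) (decK : nat -> K)
  (f : G -> K) : Prop :=
  exists p, forall x, exists r, eval p [x] r /\ decK r = f (decG x).

From Stdlib Require Import List Arith Lia Classical IndefiniteDescription.
Import ListNotations.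

(* If [b = c0^-1 a c0] in [G], the conjugators from [a] to [b] are exactly the elements of
   [C_G(a) c0]. Hence [a] and [b] are conjugate in [H = phi^-1(K')] iff some [k] in the finite
   group [K'] lies in [phi(C_G(a)) phi(c0)], that is, iff [k phi(c0)^-1] belongs to the subgroup
   of [K] generated by the images of the computed generators of [C_G(a)]: finitely many
   membership queries in [K]. When the answer is yes, a conjugator is found by unbounded search,
   since membership in [H] is decidable through [K'] and equality in [G] is decidable because
   [x = 1] iff [x] is conjugate to [1]. *)

(** * Computable functions *)

Definition computes (p : prog) (F : list nat -> nat) : Prop := forall xs, eval p xs (F xs).
Definition computes1 (p : prog) (f : nat -> nat) : Prop := forall a, eval p [a] (f a).
Definition computes2 (p : prog) (f : nat -> nat -> nat) : Prop := forall a b, eval p [a; b] (f a b).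

Lemma eval_eq p xs y z : eval p xs y -> y = z -> eval p xs z.
Proof. now intros ? ->. Qed.

Lemma computes_ext p F F' : computes p F -> (forall xs, F xs = F' xs) -> computes p F'.
Proof. intros Hp E xs; rewrite <- E; apply Hp. Qed.

Lemma computes_Zero : computes Zero (fun _ => 0).
Proof. intro; constructor. Qed.

Lemma computes_Proj i : computes (Proj i) (fun xs => nth i xs 0).
Proof. intro; constructor. Qed.

Lemma computes_Succ : computes1 Succ S.
Proof. intro; constructor. Qed.

Lemma computes_comp1 f F g Gf :
  computes1 f F -> computes g Gf -> computes (Comp f [g]) (fun xs => F (Gf xs)).
Proof. intros Hf Hg xs; econstructor; [constructor; [apply Hg | constructor] | apply Hf]. Qed.

Lemma computes_comp2 f F g1 G1 g2 G2 :
  computes2 f F -> computes g1 G1 -> computes g2 G2 ->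
  computes (Comp f [g1; g2]) (fun xs => F (G1 xs) (G2 xs)).
Proof.
  intros Hf H1 H2 xs; econstructor; [|apply Hf].
  constructor; [apply H1 | constructor; [apply H2 | constructor]].
Qed.

Fixpoint prec_fun (F S' : list nat -> nat) (n : nat) (xs : list nat) : nat :=
  match n with 0 => F xs | S n' => S' (n' :: prec_fun F S' n' xs :: xs) end.

Lemma eval_Prec g F h S' :
  computes g F -> computes h S' -> forall n xs, eval (Prec g h) (n :: xs) (prec_fun F S' n xs).
Proof.
  intros Hg Hh n xs; induction n; cbn [prec_fun]; [constructor; apply Hg|].
  econstructor; [exact IHn | apply Hh].
Qed.

Lemma eval_Mu f F xs n :
  computes f F -> F (n :: xs) = 0 -> (forall m, m < n -> F (m :: xs) <> 0) -> eval (Mu f) xs n.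
Proof.
  intros Hf Hn Hlt; constructor; [rewrite <- Hn; apply Hf|].
  intros m Hm; exists (pred (F (m :: xs))); apply (eval_eq _ _ _ _ (Hf _)).
  specialize (Hlt m Hm); lia.
Qed.

Lemma least_zero (F : nat -> nat) n : F n = 0 -> exists m, F m = 0 /\ forall k, k < m -> F k <> 0.
Proof.
  induction n as [n IH] using lt_wf_ind; intros Hn.
  destruct (classic (exists k, k < n /\ F k = 0)) as [[k [Hk Fk]]|Hno]; [exact (IH k Hk Fk)|].
  exists n; split; [exact Hn|]; intros k Hk Fk; apply Hno; eauto.
Qed.

Lemma eval_Mu_exists f F xs n :
  computes f F -> F (n :: xs) = 0 -> exists m, eval (Mu f) xs m /\ F (m :: xs) = 0.
Proof.
  intros Hf Hn; destruct (least_zero (fun m => F (m :: xs)) n Hn) as [m [Hm Hmin]].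
  exists m; split; [apply (eval_Mu _ F)|]; auto.
Qed.

Fixpoint constp (n : nat) : prog := match n with 0 => Zero | S n => Comp Succ [constp n] end.

Lemma computes_constp n : computes (constp n) (fun _ => n).
Proof. induction n; [apply computes_Zero | exact (computes_comp1 _ _ _ _ computes_Succ IHn)]. Qed.

Definition add_prog : prog := Prec (Proj 0) (Comp Succ [Proj 1]).
Definition mul_prog : prog := Prec Zero (Comp add_prog [Proj 1; Proj 2]).
Definition pred_prog : prog := Prec Zero (Proj 0).
Definition rsub_prog : prog := Prec (Proj 0) (Comp pred_prog [Proj 1]).

Lemma computes_add_prog : computes2 add_prog Nat.add.
Proof.
  intros a b; eapply eval_eq.
  - apply eval_Prec; [apply computes_Proj|].
    exact (computes_comp1 _ _ _ _ computes_Succ (computes_Proj 1)).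
  - induction a; cbn in *; congruence.
Qed.

Lemma computes_mul_prog : computes2 mul_prog Nat.mul.
Proof.
  intros a b; eapply eval_eq.
  - apply eval_Prec; [apply computes_Zero|].
    exact (computes_comp2 _ _ _ _ _ _ computes_add_prog (computes_Proj 1) (computes_Proj 2)).
  - induction a; cbn in *; [reflexivity | rewrite IHa; lia].
Qed.

Lemma computes_pred_prog : computes1 pred_prog pred.
Proof.
  intros a; eapply eval_eq; [apply eval_Prec; [apply computes_Zero | apply computes_Proj]|].
  now destruct a.
Qed.

Lemma computes_rsub_prog : computes2 rsub_prog (fun b a => a - b).
Proof.
  intros b a; eapply eval_eq.
  - apply eval_Prec; [apply computes_Proj|].
    exact (computes_comp1 _ _ _ _ computes_pred_prog (computes_Proj 1)).
  - induction b; cbn in *; [lia | rewrite IHb; lia].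
Qed.

Definition succp p := Comp Succ [p].
Definition predp p := Comp pred_prog [p].
Definition addp p q := Comp add_prog [p; q].
Definition mulp p q := Comp mul_prog [p; q].
Definition subp p q := Comp rsub_prog [q; p].
Definition iszerop p := subp (constp 1) p.
Definition sgp p := iszerop (iszerop p).
Definition ifzp c p q := addp (mulp (iszerop c) p) (mulp (sgp c) q).

Section Lifted.
Variables (p q : prog) (P Q : list nat -> nat).
Hypotheses (HP : computes p P) (HQ : computes q Q).

Lemma computes_succp : computes (succp p) (fun xs => S (P xs)).
Proof. exact (computes_comp1 _ _ _ _ computes_Succ HP). Qed.
Lemma computes_predp : computes (predp p) (fun xs => pred (P xs)).
Proof. exact (computes_comp1 _ _ _ _ computes_pred_prog HP). Qed.
Lemma computes_addp : computes (addp p q) (fun xs => P xs + Q xs).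
Proof. exact (computes_comp2 _ _ _ _ _ _ computes_add_prog HP HQ). Qed.
Lemma computes_mulp : computes (mulp p q) (fun xs => P xs * Q xs).
Proof. exact (computes_comp2 _ _ _ _ _ _ computes_mul_prog HP HQ). Qed.
Lemma computes_subp : computes (subp p q) (fun xs => P xs - Q xs).
Proof. exact (computes_comp2 _ _ _ _ _ _ computes_rsub_prog HQ HP). Qed.
Lemma computes_iszerop : computes (iszerop p) (fun xs => 1 - P xs).
Proof. exact (computes_comp2 _ _ _ _ _ _ computes_rsub_prog HP (computes_constp 1)). Qed.
Lemma computes_sgp : computes (sgp p) (fun xs => 1 - (1 - P xs)).
Proof. exact (computes_comp2 _ _ _ _ _ _ computes_rsub_prog computes_iszerop (computes_constp 1)). Qed.
End Lifted.

Lemma computes_ifzp c p q C P Q : computes c C -> computes p P -> computes q Q ->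
  computes (ifzp c p q) (fun xs => if C xs =? 0 then P xs else Q xs).
Proof.
  intros HC HP HQ; eapply computes_ext.
  - apply computes_addp; apply computes_mulp; eauto using computes_iszerop, computes_sgp.
  - intros xs; cbn beta; destruct (C xs); cbn; lia.
Qed.

Create HintDb computes.
#[export] Hint Resolve computes_Zero computes_Proj computes_Succ computes_constp computes_comp1
  computes_comp2 computes_succp computes_predp computes_addp computes_mulp computes_subp
  computes_iszerop computes_sgp : computes.

Ltac solve_computes := eapply computes_ext; [eauto 40 with computes | intros; reflexivity].

(** * Cantor pairing and list codes *)

Fixpoint tri (n : nat) : nat := match n with 0 => 0 | S n => tri n + S n end.

Definition tri_prog : prog := Prec Zero (Comp add_prog [Proj 1; Comp Succ [Proj 0]]).

Lemma computes_tri_prog : computes1 tri_prog tri.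
Proof.
  intros a; eapply eval_eq; [apply eval_Prec; solve_computes|].
  induction a; cbn in *; congruence.
Qed.

Lemma tri_monotone i j : i <= j -> tri i <= tri j.
Proof. induction 1; cbn; lia. Qed.

Lemma cpair_tri x y : cpair x y = tri (x + y) + y.
Proof.
  assert (Htri : forall n, tri n * 2 = n * (n + 1)) by (induction n; cbn [tri]; nia).
  unfold cpair; rewrite <- Htri, Nat.div_mul; lia.
Qed.

Fixpoint tri_root (m : nat) : nat :=
  match m with
  | 0 => 0
  | S m' => if S m' <? tri (S (tri_root m')) then tri_root m' else S (tri_root m')
  end.

Lemma tri_root_spec m : tri (tri_root m) <= m < tri (S (tri_root m)).
Proof.
  induction m; simpl; [lia|].
  destruct (Nat.ltb_spec (S m) (tri (tri_root m) + S (tri_root m))); simpl in *; lia.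
Qed.

Lemma tri_root_unique s m : tri s <= m < tri (S s) -> tri_root m = s.
Proof.
  intros Hs; pose proof (tri_root_spec m).
  destruct (Nat.lt_total (tri_root m) s) as [Hl|[He|Hl]]; auto;
    apply tri_monotone in Hl; cbn in *; lia.
Qed.

(* The least [n] with [m < tri (S n)] is [tri_root m]. *)
Definition tri_root_prog : prog := Mu (subp (succp (Proj 1)) (Comp tri_prog [succp (Proj 0)])).

Lemma computes_tri_root_prog : computes1 tri_root_prog tri_root.
Proof.
  intros m; pose proof (tri_root_spec m).
  apply (eval_Mu _ (fun xs => S (nth 1 xs 0) - tri (S (nth 0 xs 0)))).
  - pose proof computes_tri_prog; solve_computes.
  - cbn [nth]; lia.
  - intros k Hk; apply tri_monotone in Hk; cbn [nth] in *; lia.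
Qed.

Definition cpair_snd (m : nat) : nat := m - tri (tri_root m).
Definition cpair_fst (m : nat) : nat := tri_root m - cpair_snd m.

Lemma cpair_fst_snd x y : cpair_fst (cpair x y) = x /\ cpair_snd (cpair x y) = y.
Proof.
  rewrite cpair_tri.
  assert (E : tri_root (tri (x + y) + y) = x + y) by (apply tri_root_unique; cbn; lia).
  unfold cpair_fst, cpair_snd; rewrite E; lia.
Qed.

Definition cpair_sndp p := subp p (Comp tri_prog [Comp tri_root_prog [p]]).
Definition cpair_fstp p := subp (Comp tri_root_prog [p]) (cpair_sndp p).

Lemma computes_cpair_sndp p P : computes p P -> computes (cpair_sndp p) (fun xs => cpair_snd (P xs)).
Proof. pose proof computes_tri_prog; pose proof computes_tri_root_prog; intros; solve_computes. Qed.

Lemma computes_cpair_fstp p P : computes p P -> computes (cpair_fstp p) (fun xs => cpair_fst (P xs)).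
Proof.
  pose proof computes_tri_root_prog; pose proof computes_cpair_sndp; intros; solve_computes.
Qed.

Definition cpairp p q := addp (Comp tri_prog [addp p q]) q.

Lemma computes_cpairp p P q Q :
  computes p P -> computes q Q -> computes (cpairp p q) (fun xs => cpair (P xs) (Q xs)).
Proof.
  pose proof computes_tri_prog; intros; eapply computes_ext; [eauto 10 with computes|].
  intros; symmetry; apply cpair_tri.
Qed.

Definition code_hd (c : nat) : nat := cpair_fst (pred c).
Definition code_tl (c : nat) : nat := cpair_snd (pred c).

Lemma code_hd_cons x l : code_hd (code_list (x :: l)) = x.
Proof. apply cpair_fst_snd. Qed.

Lemma code_tl_list l : code_tl (code_list l) = code_list (tl l).
Proof. destruct l; [reflexivity | apply cpair_fst_snd]. Qed.

Lemma length_le_code_list l : length l <= code_list l.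
Proof. induction l; simpl; [lia|]; rewrite cpair_tri; lia. Qed.

Fixpoint code_drop (k m : nat) : nat := match k with 0 => m | S k => code_tl (code_drop k m) end.

Lemma code_drop_list k l : code_drop k (code_list l) = code_list (skipn k l).
Proof.
  induction k as [|k IHk]; cbn [code_drop]; [reflexivity|].
  rewrite IHk, code_tl_list, <- (skipn_skipn 1 k); now destruct (skipn k l).
Qed.

Definition code_drop_prog : prog := Prec (Proj 0) (cpair_sndp (predp (Proj 1))).

Lemma computes_code_drop_prog : computes2 code_drop_prog code_drop.
Proof.
  intros k m; eapply eval_eq.
  - apply eval_Prec; [apply computes_Proj | apply computes_cpair_sndp; solve_computes].
  - induction k; cbn [prec_fun code_drop nth] in *; [reflexivity | now rewrite IHk].
Qed.

Section MapCode.
Variables (pf : prog) (f : nat -> nat).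
Hypothesis f_eval : computes1 pf f.

(* Run for [m] steps, which suffices because a list is shorter than its code (see
   [length_le_code_list]); steps past the end of the list leave the accumulator unchanged. *)
Fixpoint code_map_acc (k m : nat) : nat :=
  match k with
  | 0 => 0
  | S k => if code_drop k m =? 0 then code_map_acc k m
           else S (cpair (f (code_hd (code_drop k m))) (code_map_acc k m))
  end.

Definition code_map_prog : prog :=
  Comp (Prec Zero (ifzp (Comp code_drop_prog [Proj 0; Proj 2]) (Proj 1)
          (succp (cpairp (Comp pf [cpair_fstp (predp (Comp code_drop_prog [Proj 0; Proj 2]))])
                         (Proj 1)))))
       [Proj 0; Proj 0].

Lemma code_map_acc_list k l : code_map_acc k (code_list l) = code_list (rev (map f (firstn k l))).
Proof.
  induction k as [|k IHk]; cbn [code_map_acc]; [now rewrite firstn_O|].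
  rewrite code_drop_list, IHk.
  destruct (skipn k l) as [|x r] eqn:E.
  - apply skipn_all_iff in E; now rewrite !firstn_all2 by lia.
  - rewrite code_hd_cons; cbn [code_list Nat.eqb].
    assert (Hk : k < length l) by (apply Nat.nle_gt; rewrite skipn_all_iff, E; congruence).
    assert (Ek : firstn (S k) l = firstn k l ++ [x]).
    { assert (Hlen : length (firstn k l) = k) by (apply firstn_length_le; lia).
      rewrite <- (firstn_skipn k l) at 1.
      rewrite E, firstn_app, Hlen, firstn_all2 by lia.
      now replace (S k - k) with 1 by lia. }
    now rewrite Ek, map_app, rev_app_distr.
Qed.

Lemma eval_code_map_prog l : eval code_map_prog [code_list l] (code_list (rev (map f l))).
Proof.
  econstructor; [constructor; [apply computes_Proj | constructor; [apply computes_Proj | constructor]]|].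
  cbn [nth]; eapply eval_eq.
  - apply eval_Prec; [apply computes_Zero|].
    pose proof computes_code_drop_prog; pose proof computes_cpair_fstp; pose proof computes_cpairp.
    apply computes_ifzp; eauto 20 with computes.
  - transitivity (code_map_acc (code_list l) (code_list l)).
    + generalize (code_list l) at 1 3; intros k.
      induction k; cbn [prec_fun code_map_acc nth]; [reflexivity | now rewrite IHk].
    + now rewrite code_map_acc_list, firstn_all2 by apply length_le_code_list.
Qed.
End MapCode.

Definition sump (ks : list nat) (body : nat -> prog) : prog :=
  fold_right (fun k acc => addp (body k) acc) Zero ks.

Lemma computes_sump ks body (B : nat -> list nat -> nat) :
  (forall k, computes (body k) (B k)) ->
  computes (sump ks body) (fun xs => list_sum (map (fun k => B k xs) ks)).
Proof. intros HB; induction ks; cbn; [apply computes_Zero | apply computes_addp; auto]. Qed.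

Lemma list_sum_neq0 (f : nat -> nat) ks : list_sum (map f ks) <> 0 <-> exists k, In k ks /\ f k <> 0.
Proof.
  induction ks as [|a ks IH]; [split; [cbn; lia | intros [k [[] _]]]|].
  change (list_sum (map f (a :: ks))) with (f a + list_sum (map f ks)); split.
  - intros Hs; destruct (Nat.eq_dec (f a) 0) as [E|E]; [|exists a; cbn; auto].
    destruct (proj1 IH) as [k [Hk Fk]]; [lia | exists k; cbn; auto].
  - intros [k [[<-|Hk] Fk]]; [lia|].
    assert (list_sum (map f ks) <> 0) by (apply IH; eauto); lia.
Qed.

(* The search is guarded by the flag, so it stops at once when the flag is [0]. *)
Lemma decide_then_search pfl (fl : nat -> nat -> nat) ptest (test : nat -> nat -> nat -> nat) :
  computes2 pfl fl ->
  computes ptest (fun xs => test (nth 0 xs 0) (nth 1 xs 0) (nth 2 xs 0)) ->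
  (forall x y, fl x y <> 0 -> exists c, test c x y = 0) ->
  exists p, forall x y, exists r, eval p [x; y] r /\
    ((r = 0 /\ fl x y = 0) \/ (exists c, r = S c /\ fl x y <> 0 /\ test c x y = 0)).
Proof.
  intros Hfl Htest Hwit.
  set (guarded := mulp (Comp pfl [Proj 1; Proj 2]) ptest).
  exists (mulp (sgp (Comp pfl [Proj 0; Proj 1])) (succp (Mu guarded))); intros x y.
  assert (Cguarded : computes guarded
            (fun xs => fl (nth 1 xs 0) (nth 2 xs 0) * test (nth 0 xs 0) (nth 1 xs 0) (nth 2 xs 0)))
    by solve_computes.
  assert (Hzero : exists c, fl x y * test c x y = 0).
  { destruct (Nat.eq_dec (fl x y) 0) as [E|E]; [exists 0; now rewrite E|].
    destruct (Hwit x y E) as [c Hc]; exists c; now rewrite Hc, Nat.mul_0_r. }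
  destruct Hzero as [c0 Hc0].
  destruct (eval_Mu_exists _ _ [x; y] c0 Cguarded Hc0) as [c [Hmu Hc]]; cbn [nth] in Hc.
  exists ((1 - (1 - fl x y)) * S c); split.
  - econstructor; [|apply computes_mul_prog].
    constructor.
    { assert (Cflag : computes (sgp (Comp pfl [Proj 0; Proj 1]))
                (fun xs => 1 - (1 - fl (nth 0 xs 0) (nth 1 xs 0)))) by solve_computes.
      exact (Cflag [x; y]). }
    constructor; [econstructor; [constructor; [exact Hmu | constructor] | apply computes_Succ]|].
    constructor.
  - destruct (Nat.eq_dec (fl x y) 0) as [E|E]; [left; now rewrite E|right].
    exists c; repeat split; [lia | exact E | nia].
Qed.

(** * Groups *)

Section GroupLemmas.
Variable G : group.
Implicit Types x y z : G.

Lemma mulgV x : mul x (inv x) = one.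
Proof.
  assert (Hidem : mul (mul x (inv x)) (mul x (inv x)) = mul x (inv x)).
  { rewrite <- mulA, (mulA _ (inv x) x), mulVg, mul1g; reflexivity. }
  set (e := mul x (inv x)) in *.
  transitivity (mul (mul (inv e) e) e); [rewrite mulVg, mul1g; reflexivity|].
  rewrite <- mulA, Hidem, mulVg; reflexivity.
Qed.

Lemma mulg1 x : mul x one = x.
Proof. rewrite <- (mulVg G x), mulA, mulgV, mul1g; reflexivity. Qed.

Lemma mulgI x y z : mul x y = mul x z -> y = z.
Proof.
  intros E; rewrite <- (mul1g _ y), <- (mulVg _ x), <- mulA, E, mulA, mulVg, mul1g; reflexivity.
Qed.

Lemma mulg_eq1_inv x y : mul x y = one -> y = inv x.
Proof. intros E; apply (mulgI x); rewrite E, mulgV; reflexivity. Qed.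

Lemma invgK x : inv (inv x) = x.
Proof. symmetry; apply mulg_eq1_inv, mulVg. Qed.

Lemma invMg x y : inv (mul x y) = mul (inv y) (inv x).
Proof.
  symmetry; apply mulg_eq1_inv.
  rewrite <- mulA, (mulA _ y), mulgV, mul1g, mulgV; reflexivity.
Qed.

Lemma mulKg x y : mul (inv x) (mul x y) = y.
Proof. rewrite mulA, mulVg, mul1g; reflexivity. Qed.

Lemma conjg_mul_central (z c a : G) : mul z a = mul a z ->
  mul (inv (mul z c)) (mul a (mul z c)) = mul (inv c) (mul a c).
Proof.
  intros Hz; rewrite invMg, <- mulA; f_equal.
  rewrite (mulA _ a z c), <- Hz, <- mulA, mulKg; reflexivity.
Qed.

Lemma conjg_eq_central (h c a : G) : mul (inv h) (mul a h) = mul (inv c) (mul a c) ->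
  mul (mul h (inv c)) a = mul a (mul h (inv c)).
Proof.
  intros E.
  assert (Eh : mul a h = mul h (mul (inv c) (mul a c)))
    by (rewrite <- E, mulA, mulgV, mul1g; reflexivity).
  rewrite (mulA _ a h), Eh, <- !mulA, mulgV, mulg1; reflexivity.
Qed.

Lemma generated_incl (l1 l2 : list G) g :
  incl l1 l2 -> generated G l1 g -> generated G l2 g.
Proof.
  intros Hincl Hg; induction Hg; [apply gen_in; auto | apply gen_one | apply gen_mul | apply gen_inv]; auto.
Qed.

Lemma generated_min (S : G -> Prop) (l : list G) g :
  is_subgroup G S -> (forall z, In z l -> S z) -> generated G l g -> S g.
Proof. intros [S1 [SM SV]] Hl Hg; induction Hg; auto. Qed.
End GroupLemmas.

Section Homomorphism.
Variables (G K : group) (phi : G -> K).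
Hypothesis phi_hom : is_hom G K phi.

Lemma hom1 : phi one = one.
Proof. apply (mulgI K (phi one)); rewrite <- phi_hom, mul1g, mulg1; reflexivity. Qed.

Lemma homV x : phi (inv x) = inv (phi x).
Proof. apply mulg_eq1_inv; rewrite <- phi_hom, mulgV, hom1; reflexivity. Qed.

Lemma generated_map_hom l u :
  generated K (map phi l) u <-> exists z, generated G l z /\ phi z = u.
Proof.
  split.
  - induction 1 as [u Hu| |u v _ [z [Hz <-]] _ [w [Hw <-]]|u _ [z [Hz <-]]].
    + apply in_map_iff in Hu as [z [<- Hz]]; exists z; split; [apply gen_in|]; auto.
    + exists one; split; [apply gen_one | apply hom1].
    + exists (mul z w); split; [apply gen_mul | apply phi_hom]; auto.
    + exists (inv z); split; [apply gen_inv | apply homV]; auto.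
  - intros [z [Hz <-]]; induction Hz.
    + apply gen_in, in_map; auto.
    + rewrite hom1; apply gen_one.
    + rewrite phi_hom; apply gen_mul; auto.
    + rewrite homV; apply gen_inv; auto.
Qed.

Lemma subgroup_conjugate_iff (H : G -> Prop) (K' : K -> Prop) (l : list G) (a b c0 : G) :
  (forall g, H g <-> K' (phi g)) ->
  (forall g, generated G l g <-> centralizer G a g) ->
  b = mul (inv c0) (mul a c0) ->
  (exists h, H h /\ b = mul (inv h) (mul a h)) <->
  (exists k, K' k /\ generated K (map phi l) (mul k (inv (phi c0)))).
Proof.
  intros HK' Hl Eb; split.
  - intros [h [Hh Ebh]]; exists (phi h); split; [apply HK'; exact Hh|].
    apply generated_map_hom; exists (mul h (inv c0)); split.
    + apply Hl, conjg_eq_central; congruence.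
    + rewrite phi_hom, homV; reflexivity.
  - intros [k [Hk Hgen]]; apply generated_map_hom in Hgen as [z [Hz Ez]].
    exists (mul z c0); split.
    + apply HK'; rewrite phi_hom, Ez, <- mulA, mulVg, mulg1; exact Hk.
    + rewrite conjg_mul_central; [exact Eb | apply Hl, Hz].
Qed.
End Homomorphism.

(** * The decision procedure *)

Lemma computable_choice1 p (Q : nat -> nat -> Prop) :
  (forall x, exists r, eval p [x] r /\ Q x r) -> exists f, computes1 p f /\ forall x, Q x (f x).
Proof. intros Hx; destruct (functional_choice _ Hx) as [f Hf]; exists f; split; intro; apply Hf. Qed.

Lemma computable_choice2 p (Q : nat -> nat -> nat -> Prop) :
  (forall x y, exists r, eval p [x; y] r /\ Q x y r) ->
  exists f, computes2 p f /\ forall x y, Q x y (f x y).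
Proof.
  intros Hxy.
  destruct (functional_choice (fun xy r => eval p [fst xy; snd xy] r /\ Q (fst xy) (snd xy) r))
    as [f Hf]; [intros [x y]; apply Hxy|].
  exists (fun x y => f (x, y)); split; intros x y; apply (Hf (x, y)).
Qed.

Lemma explicit_group_ops G decG : explicit_group G decG ->
  (forall g : G, exists c, decG c = g) /\
  (exists pmul cmul, computes2 pmul cmul /\ forall x y, decG (cmul x y) = mul (decG x) (decG y)) /\
  (exists pinv cinv, computes1 pinv cinv /\ forall x, decG (cinv x) = inv (decG x)).
Proof.
  intros [surj [[pmul Hmul] [pinv Hinv]]]; split; [exact surj|split].
  - destruct (computable_choice2 pmul _ Hmul) as [f Hf]; eauto.
  - destruct (computable_choice1 pinv _ Hinv) as [f Hf]; eauto.
Qed.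

Lemma centralizer_generators G decG : centralizer_algorithm G decG ->
  exists pcent (ccent : nat -> list nat), computes1 pcent (fun x => code_list (ccent x)) /\
    forall x g, generated G (map decG (ccent x)) g <-> centralizer G (decG x) g.
Proof.
  intros [pcent Hcent].
  destruct (functional_choice (fun x l => eval pcent [x] (code_list l) /\
              forall g, generated G (map decG l) g <-> centralizer G (decG x) g)) as [f Hf].
  { intros x; destruct (Hcent x) as [r [Hr [l [-> Hl]]]]; eauto. }
  exists pcent, f; split; [intro x | intros x]; apply Hf.
Qed.

Lemma membership_decider K decK : membership_solution K decK ->
  exists pmem (cmem : list nat -> nat -> nat),
    (forall l g, eval pmem [code_list l; g] (cmem l g)) /\
    (forall l g, cmem l g <> 0 <-> generated K (map decK l) (decK g)).
Proof.
  intros [pmem Hmem].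
  destruct (functional_choice (fun lg r => eval pmem [code_list (fst lg); snd lg] r /\
              (r <> 0 <-> generated K (map decK (fst lg)) (decK (snd lg))))) as [f Hf].
  { intros [l g]; destruct (Hmem l g) as [Hin Hout]; cbn [fst snd].
    destruct (classic (generated K (map decK l) (decK g))) as [Hg|Hg];
      [exists 1 | exists 0]; split; auto; split; auto; congruence. }
  exists pmem, (fun l g => f (l, g)); split; intros l g; apply (Hf (l, g)).
Qed.

Section Algorithm.
Variables (G K : group) (decG : nat -> G) (decK : nat -> K) (phi : G -> K).
Variables (H : G -> Prop) (K' : K -> Prop) (lK' : list nat).
Hypothesis phi_hom : is_hom G K phi.
Hypothesis H_preimage : forall g, H g <-> K' (phi g).
Hypothesis K'_subgroup : is_subgroup K K'.
Hypothesis lK'_enum : forall k, K' k <-> exists c, In c lK' /\ decK c = k.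
Hypothesis decG_surj : forall g : G, exists c, decG c = g.

Variables (pmulG pinvG pmulK pinvK pphi pconj pcent pmem : prog).
Variables (cmulG cmulK cconj : nat -> nat -> nat) (cinvG cinvK cphi : nat -> nat).
Variables (ccent : nat -> list nat) (cmem : list nat -> nat -> nat) (one_code : nat).
Hypotheses (cmulG_eval : computes2 pmulG cmulG) (cinvG_eval : computes1 pinvG cinvG)
  (cmulK_eval : computes2 pmulK cmulK) (cinvK_eval : computes1 pinvK cinvK)
  (cphi_eval : computes1 pphi cphi) (cconj_eval : computes2 pconj cconj)
  (ccent_eval : computes1 pcent (fun x => code_list (ccent x)))
  (cmem_eval : forall l g, eval pmem [code_list l; g] (cmem l g)).
Hypothesis cmulG_spec : forall x y, decG (cmulG x y) = mul (decG x) (decG y).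
Hypothesis cinvG_spec : forall x, decG (cinvG x) = inv (decG x).
Hypothesis cmulK_spec : forall x y, decK (cmulK x y) = mul (decK x) (decK y).
Hypothesis cinvK_spec : forall x, decK (cinvK x) = inv (decK x).
Hypothesis cphi_spec : forall x, decK (cphi x) = phi (decG x).
Hypothesis cconj_spec : forall x y,
  (cconj x y = 0 /\ ~ exists c : G, decG x = mul (inv c) (mul (decG y) c)) \/
  (exists c, cconj x y = S c /\ decG x = mul (inv (decG c)) (mul (decG y) (decG c))).
Hypothesis ccent_spec : forall x g, generated G (map decG (ccent x)) g <-> centralizer G (decG x) g.
Hypothesis cmem_spec : forall l g, cmem l g <> 0 <-> generated K (map decK l) (decK g).
Hypothesis one_code_spec : decG one_code = one.

Definition cent_image (x : nat) : list nat := rev (map cphi (ccent x)).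

(* [cconj y x = S c0] provides a conjugator [c0] from [decG x] to [decG y]. *)
Definition flag (x y : nat) : nat :=
  cconj y x *
  list_sum (map (fun k => cmem (cent_image x) (cmulK k (cinvK (cphi (pred (cconj y x)))))) lK').

(* Equality in [G] is tested as conjugacy to [1]. *)
Definition test (c x y : nat) : nat :=
  (1 - cconj (cmulG y (cinvG (cmulG (cinvG c) (cmulG x c)))) one_code) + (1 - cmem lK' (cphi c)).

Lemma cconj_one_code z : cconj z one_code <> 0 <-> decG z = one.
Proof.
  destruct (cconj_spec z one_code) as [[-> Hno]|[c [-> Hc]]]; split; try congruence.
  - intros Hz; exfalso; apply Hno; exists one.
    rewrite Hz, one_code_spec, mul1g, mulVg; reflexivity.
  - intros _; rewrite Hc, one_code_spec, mul1g, mulVg; reflexivity.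
Qed.

Lemma cmem_lK' c : cmem lK' (cphi c) <> 0 <-> H (decG c).
Proof.
  rewrite cmem_spec, cphi_spec, H_preimage; split.
  - apply generated_min; [exact K'_subgroup|].
    intros z Hz; apply in_map_iff in Hz as [c' [<- Hc']]; apply lK'_enum; eauto.
  - intros Hk; apply lK'_enum in Hk as [c' [Hc' <-]]; apply gen_in, in_map, Hc'.
Qed.

Lemma test_spec c x y :
  test c x y = 0 <-> H (decG c) /\ decG y = mul (inv (decG c)) (mul (decG x) (decG c)).
Proof.
  unfold test; rewrite <- cmem_lK'.
  set (w := mul (inv (decG c)) (mul (decG x) (decG c))).
  assert (Ediff : decG (cmulG y (cinvG (cmulG (cinvG c) (cmulG x c)))) = mul (decG y) (inv w))
    by (rewrite cmulG_spec, !cinvG_spec, !cmulG_spec, cinvG_spec; reflexivity).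
  assert (Eq : cconj (cmulG y (cinvG (cmulG (cinvG c) (cmulG x c)))) one_code <> 0 <-> decG y = w).
  { rewrite cconj_one_code, Ediff; split.
    - intros E; apply mulg_eq1_inv in E; rewrite <- (invgK _ w), E, invgK; reflexivity.
    - intros ->; apply mulgV. }
  rewrite <- Eq; lia.
Qed.

Lemma generated_cent_image x u :
  generated K (map decK (cent_image x)) u <-> generated K (map phi (map decG (ccent x))) u.
Proof.
  assert (E : map decK (map cphi (ccent x)) = map phi (map decG (ccent x))).
  { rewrite !map_map; apply map_ext, cphi_spec. }
  unfold cent_image; rewrite map_rev, E.
  split; apply generated_incl; intros z; rewrite <- in_rev; auto.
Qed.

Lemma flag_spec x y :
  flag x y <> 0 <-> exists h, H h /\ decG y = mul (inv h) (mul (decG x) h).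
Proof.
  unfold flag; destruct (cconj_spec y x) as [[-> Hno]|[c0 [-> Ec0]]].
  - split; [cbn; congruence|]; intros [h [_ Eh]]; exfalso; apply Hno; eauto.
  - rewrite (subgroup_conjugate_iff G K phi phi_hom H K' _ _ _ _ H_preimage (ccent_spec x) Ec0).
    cbn [pred]; rewrite Nat.mul_comm, <- Nat.neq_mul_0, list_sum_neq0; split.
    + intros [[k [Hk Hmem]] _]; exists (decK k); split; [apply lK'_enum; eauto|].
      apply cmem_spec, generated_cent_image in Hmem.
      now rewrite cmulK_spec, cinvK_spec, cphi_spec in Hmem.
    + intros [k [Hk Hgen]]; split; [|lia].
      apply lK'_enum in Hk as [k' [Hk' <-]]; exists k'; split; [exact Hk'|].
      apply cmem_spec, generated_cent_image.
      now rewrite cmulK_spec, cinvK_spec, cphi_spec.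
Qed.

Definition flag_prog : prog :=
  mulp (Comp pconj [Proj 1; Proj 0])
    (sump lK' (fun k => Comp pmem [Comp (code_map_prog pphi) [Comp pcent [Proj 0]];
      Comp pmulK [constp k; Comp pinvK [Comp pphi [predp (Comp pconj [Proj 1; Proj 0])]]]])).

Definition test_prog : prog :=
  addp (iszerop (Comp pconj [Comp pmulG [Proj 2; Comp pinvG [Comp pmulG [Comp pinvG [Proj 0];
                               Comp pmulG [Proj 1; Proj 0]]]]; constp one_code]))
       (iszerop (Comp pmem [constp (code_list lK'); Comp pphi [Proj 0]])).

Lemma computes_mem q1 L q2 Q :
  computes q1 (fun xs => code_list (L xs)) -> computes q2 Q ->
  computes (Comp pmem [q1; q2]) (fun xs => cmem (L xs) (Q xs)).
Proof.
  intros H1 H2 xs; econstructor; [|apply cmem_eval].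
  constructor; [apply H1 | constructor; [apply H2 | constructor]].
Qed.

Lemma computes_flag_prog : computes2 flag_prog flag.
Proof.
  assert (Cimage : computes (Comp (code_map_prog pphi) [Comp pcent [Proj 0]])
                     (fun xs => code_list (cent_image (nth 0 xs 0)))).
  { intros xs; econstructor.
    - constructor; [exact (computes_comp1 _ _ _ _ ccent_eval (computes_Proj 0) xs) | constructor].
    - apply eval_code_map_prog, cphi_eval. }
  enough (C : computes flag_prog (fun xs => flag (nth 0 xs 0) (nth 1 xs 0)))
    by (intros a b; apply (C [a; b])).
  apply computes_mulp; [solve_computes|].
  apply computes_sump; intros k; apply computes_mem; [exact Cimage | solve_computes].
Qed.

Lemma computes_test_prog : computes test_prog (fun xs => test (nth 0 xs 0) (nth 1 xs 0) (nth 2 xs 0)).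
Proof.
  apply computes_addp; apply computes_iszerop; [solve_computes|].
  apply computes_mem; [apply computes_constp | solve_computes].
Qed.

Lemma conj_solution_sub_of_oracles : conj_solution_sub G decG H.
Proof.
  destruct (decide_then_search _ _ _ _ computes_flag_prog computes_test_prog) as [p Hp].
  { intros x y Hfl; apply flag_spec in Hfl as [h [Hh Eh]].
    destruct (decG_surj h) as [c <-]; exists c; apply test_spec; auto. }
  exists p; intros x y _ _; destruct (Hp x y) as [r [Hr Hr_spec]]; exists r; split; [exact Hr|].
  destruct Hr_spec as [[-> Hfl]|[c [-> [_ Hc]]]].
  - left; split; [reflexivity|]; rewrite <- flag_spec; lia.
  - right; exists c; split; [reflexivity | apply test_spec, Hc].
Qed.
End Algorithm.

Theorem mainTheorem4
  (G : group) (decG : nat -> G)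
  (hG : explicit_group G decG)
  (hconjG : conj_solution_G G decG)
  (hcent : centralizer_algorithm G decG)
  (H : G -> Prop) (hH : is_subgroup G H)
  (K : group) (decK : nat -> K)
  (hK : explicit_group K decK)
  (hmemK : membership_solution K decK)
  (K' : K -> Prop) (hK' : is_subgroup K K')
  (lK' : list nat) (hlK' : forall k : K, K' k <-> exists c, In c lK' /\ decK c = k)
  (phi : G -> K) (hphi : is_hom G K phi)
  (hphic : computable_map G K decG decK phi)
  (hHphi : forall g : G, H g <-> K' (phi g)) :
  conj_solution_sub G decG H.
Proof.
  destruct (explicit_group_ops G decG hG)
    as [surjG [[pmulG [cmulG [HmulG EmulG]]] [pinvG [cinvG [HinvG EinvG]]]]].
  destruct (explicit_group_ops K decK hK)
    as [_ [[pmulK [cmulK [HmulK EmulK]]] [pinvK [cinvK [HinvK EinvK]]]]].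
  destruct hconjG as [pconj Hconj].
  destruct (computable_choice2 pconj _ Hconj) as [cconj [Hcconj Econj]].
  destruct hphic as [pphi Hphi]; destruct (computable_choice1 pphi _ Hphi) as [cphi [Hcphi Ephi]].
  destruct (centralizer_generators G decG hcent) as [pcent [ccent [Hccent Ecent]]].
  destruct (membership_decider K decK hmemK) as [pmem [cmem [Hcmem Emem]]].
  destruct (surjG one) as [one_code Eone].
  eapply (conj_solution_sub_of_oracles G K decG decK phi H K' lK')
    with (cmulG := cmulG) (cinvG := cinvG) (cmulK := cmulK) (cinvK := cinvK) (cphi := cphi)
         (cconj := cconj) (ccent := ccent) (cmem := cmem); eauto.
Qed.
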